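(* Let $\Gamma$ be a graph with $N$ edges. Then $\mathcal{T}(\Gamma)=\{(\mathbf{z},M\mathbf{a}):\ \mathbf{z}\in\Sigma(\Gamma),\ \mathbf{a}\in\mathbb{C}^{2N},\ U(\mathbf{z})\mathbf{a}=\mathbf{a}\}$.
   Context: $\Gamma$ is a finite graph with edges $e_1,\dots,e_N$, each oriented from $o(e_j)$ to $\tau(e_j)$; $\deg(v)$ counts edge-ends at $v$ (loops twice). For $\boldsymbol{\ell}\in\mathbb{R}_+^N$, $(\Gamma,\boldsymbol{\ell})$ has $e_j\cong[0,\ell_j]$ ($t=0$ at $o(e_j)$) and Laplacian $-d^2/dt^2$ with standard vertex conditions (continuity, and $\sum_{o(e_j)=v}f'|_{e_j}(0)-\sum_{\tau(e_j)=v}f'|_{e_j}(\ell_j)=0$). For an eigenfunction with eigenvalue $k^2$, $k>0$: $f|_{e_j}(t)=A_j\cos(kt)+B_j\sin(kt)=C_j\cos(k(\ell_j-t))+D_j\sin(k(\ell_j-t))$ and $\mathrm{tr}_k(f)=(A_1,\dots,A_N,C_1,\dots,C_N,B_1,\dots,B_N,D_1,\dots,D_N)$; for $k=0$, $f\equiv c$ gives $A_j=C_j=c$, $B_j=D_j=0$. $\mathcal{T}(\Gamma)=\{(\exp(ik\boldsymbol{\ell}),\mathrm{tr}_k(f)):\boldsymbol{\ell}\in\mathbb{R}_+^N,\ k^2\text{ eigenvalue},\ f\text{ in its eigenspace (including }0)\}\subset\mathbb{T}^N\times\mathbb{C}^{4N}$, with $\exp(ik\boldsymbol{\ell})=(e^{ik\ell_j})_j$;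 $\Sigma(\Gamma)$ is its projection to $\mathbb{T}^N$. Let $S$ be the real orthogonal $2N\times2N$ matrix acting on $\mathbf{a}=(a_1,\dots,a_N,b_1,\dots,b_N)$ by $(S\mathbf{a})_j=\frac{2}{\deg(o(e_j))}\big(\sum_{i:o(e_i)=o(e_j)}b_i+\sum_{i:\tau(e_i)=o(e_j)}a_i\big)-b_j$, $(S\mathbf{a})_{N+j}=\frac{2}{\deg(\tau(e_j))}\big(\sum_{i:o(e_i)=\tau(e_j)}b_i+\sum_{i:\tau(e_i)=\tau(e_j)}a_i\big)-a_j$; $U(\mathbf{z})=\mathrm{diag}(\mathbf{z},\mathbf{z})S$ where $\mathrm{diag}(\mathbf{z},\mathbf{z})$ has diagonal $(z_1,\dots,z_N,z_1,\dots,z_N)$. (With $f|_{e_j}(t)=a_je^{ik(t-\ell_j)}+b_je^{-ikt}$, $f$ is an eigenfunction with eigenvalue $k^2$ iff $U(\exp(ik\boldsymbol{\ell}))\mathbf{a}=\mathbf{a}$.) $J=\begin{pmatrix}0&I_N\\ I_N&0\end{pmatrix}$ and $M=\begin{pmatrix}S+J\\ i(S-J)\end{pmatrix}$, a $4N\times2N$ matrix. *)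

From HB Require Import structures.
From mathcomp Require Import all_boot all_order all_algebra.
From mathcomp Require Import all_classical all_reals all_analysis.
From mathcomp Require Import complex.
Set Implicit Arguments. Unset Strict Implicit. Unset Printing Implicit Defensive.
Import Order.TTheory GRing.Theory Num.Theory.
Local Open Scope ring_scope.

Section QGraph.
Variable R : realType.
Local Notation C := R[i].

Definition rC (x : R) : C := (x%:C)%C.
Definition iC : C := ('i)%C.

Definition expi (x : R) : C := rC (cos x) + iC * rC (sin x).

Definition cderivable (g : R -> C) (t : R) : Prop :=
  derivable (fun s => complex.Re (g s)) t 1 /\ derivable (fun s => complex.Im (g s)) t 1.
Definition cderiv (g : R -> C) : R -> C :=
  fun t => rC (derive1 (fun s => complex.Re (g s)) t) + iC * rC (derive1 (fun s => complex.Im (g s)) t).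

(* The graph: N edges e_j oriented from o j to tau j, vertex set V. *)
Variables (N : nat) (V : finType) (o tau : 'I_N -> V).

(* degree: number of edge-ends at v (loops counted twice) *)
Definition deg (v : V) : nat := #|[set j | o j == v]| + #|[set j | tau j == v]|.

(* A function on the metric graph (Gamma, l): one function per edge,
   f j restricted to [0, l j] being f on e_j (t = 0 at o(e_j)). *)
Definition onEdge (l : 'I_N -> R) (j : 'I_N) (t : R) := 0 <= t <= l j.

(* f satisfies -f'' = lam f on every edge, with standard vertex conditions
   (continuity and Kirchhoff).  The set of such f is the eigenspace of lam
   (including 0). *)
Definition in_eigenspace (l : 'I_N -> R) (lam : R) (f : 'I_N -> R -> C) : Prop :=
  [/\ (forall j t, cderivable (f j) t),
      (forall j t, onEdge l j t ->
         cderivable (cderiv (f j)) t /\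
         - cderiv (cderiv (f j)) t = rC lam * f j t),
      (exists g : V -> C, forall j, f j 0 = g (o j) /\ f j (l j) = g (tau j)) &
      (forall v : V,
         \sum_(j | o j == v) cderiv (f j) 0
         - \sum_(j | tau j == v) cderiv (f j) (l j) = 0)].

Definition is_eigenvalue (l : 'I_N -> R) (lam : R) : Prop :=
  exists f, in_eigenspace l lam f /\ exists j t, onEdge l j t /\ f j t != 0.

Definition trace_vec (A Cc B D : 'I_N -> C) : 'cV[C]_((N + N) + (N + N)) :=
  col_mx (col_mx (\col_j A j) (\col_j Cc j)) (col_mx (\col_j B j) (\col_j D j)).

Definition is_trace (l : 'I_N -> R) (k : R) (f : 'I_N -> R -> C)
    (w : 'cV[C]_((N + N) + (N + N))) : Prop :=
  exists A Cc B D : 'I_N -> C, w = trace_vec A Cc B D /\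
  if k == 0 then
    forall j, Cc j = A j /\ B j = 0 /\ D j = 0 /\
              (forall t, onEdge l j t -> f j t = A j)
  else
    forall j t, onEdge l j t ->
      f j t = A j * rC (cos (k * t)) + B j * rC (sin (k * t)) /\
      f j t = Cc j * rC (cos (k * (l j - t))) + D j * rC (sin (k * (l j - t))).

Definition inT (z : 'I_N -> C) (w : 'cV[C]_((N + N) + (N + N))) : Prop :=
  exists l : 'I_N -> R, (forall j, 0 < l j) /\
  exists k : R, 0 <= k /\ is_eigenvalue l (k ^+ 2) /\
    z = (fun j => expi (k * l j)) /\
    exists f, in_eigenspace l (k ^+ 2) f /\ is_trace l k f w.

Definition inSigma (z : 'I_N -> C) : Prop := exists w, inT z w.

Definition Sapp (a : 'cV[C]_(N + N)) : 'cV[C]_(N + N) :=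
  let aa j := a (lshift N j) 0 in
  let bb j := a (rshift N j) 0 in
  \col_p match fintype.split p with
    | inl j => (2%:R / (deg (o j))%:R) *
                 (\sum_(i | o i == o j) bb i + \sum_(i | tau i == o j) aa i) - bb j
    | inr j => (2%:R / (deg (tau j))%:R) *
                 (\sum_(i | o i == tau j) bb i + \sum_(i | tau i == tau j) aa i) - aa j
    end.

Definition Smx : 'M[C]_(N + N) := \matrix_(p, q) Sapp (delta_mx q 0) p 0.

Definition Jmx : 'M[C]_(N + N) := block_mx 0 1%:M 1%:M 0.

Definition Umx (z : 'I_N -> C) : 'M[C]_(N + N) :=
  diag_mx (\row_p match fintype.split p with inl j => z j | inr j => z j end) *m Smx.

Definition Mmx : 'M[C]_((N + N) + (N + N), N + N) :=
  col_mx (Smx + Jmx) (iC *: (Smx - Jmx)).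

End QGraph.

(* For k > 0 an eigenfunction is, on e_j, f(t) = A cos(kt) + B sin(kt)
   = C cos(k(l_j - t)) + D sin(k(l_j - t)).  In the exponential basis the two
   coefficient pairs are related by multiplication with z_j = e^{ik l_j}:
   z_j (A - iB) = C + iD and z_j (C - iD) = A + iB.  Putting
   a = ((C + iD)/2, (A + iB)/2) for the amplitudes entering the vertices and
   s = ((A - iB)/2, (C - iD)/2) for those leaving them, continuity and Kirchhoff's
   condition say precisely s = S a, so the transfer relations become U(z) a = a,
   and M a = (s + Ja, i (s - Ja)) = (A, C, B, D) gives back the trace.
   Conversely a fixed vector of U(z) defines such waves on every edge; they form
   a nonzero eigenfunction unless the trace is 0, and the cases k = 0 and zero
   trace are handled with the parameters witnessing z in Sigma(Gamma). *)

From HB Require Import structures.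
From mathcomp Require Import all_boot all_order all_algebra.
From mathcomp Require Import all_classical all_reals all_analysis.
From mathcomp Require Import complex ring lra.
Import Order.TTheory GRing.Theory Num.Theory.
Set Implicit Arguments. Unset Strict Implicit. Unset Printing Implicit Defensive.
Local Open Scope ring_scope.

Section OneSidedDerivative.
Variable R : realType.

Lemma derive1_eq_right (g h : R -> R) x d : 0 < d ->
  derivable g x 1 -> derivable h x 1 ->
  (forall t, x <= t <= x + d -> g t = h t) -> derive1 g x = derive1 h x.
Proof.
move=> d0 dg dh egh; rewrite !derive1E /derive (cvg_at_rightE _ _ dg).
apply: cvg_lim => //; apply: cvg_trans (cvg_dnbhs_at_right dh).
apply: near_eq_cvg; near=> s.
have s0 : 0 < s by near: s; exact: nbhs_right_gt.
have sd : s < d by near: s; exact: nbhs_right_lt.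
rewrite /= /GRing.scale /= mulr1 !egh ?lexx //; apply/andP; split; lra.
Unshelve. all: by end_near. Qed.

Lemma derive1_eq_left (g h : R -> R) x d : 0 < d ->
  derivable g x 1 -> derivable h x 1 ->
  (forall t, x - d <= t <= x -> g t = h t) -> derive1 g x = derive1 h x.
Proof.
move=> d0 dg dh egh; rewrite !derive1E /derive (cvg_at_leftE _ _ dg).
apply: cvg_lim => //; apply: cvg_trans (cvg_dnbhs_at_left dh).
apply: near_eq_cvg; near=> s.
have s0 : s < 0 by near: s; exact: nbhs_left_lt.
have sd : - d < s by near: s; apply: nbhs_left_gt; rewrite oppr_lt0.
rewrite /= /GRing.scale /= mulr1 !egh ?lexx //; apply/andP; split; lra.
Unshelve. all: by end_near. Qed.

Lemma cderiv_eq_right (f g : R -> R[i]) x d : 0 < d ->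
  cderivable f x -> cderivable g x ->
  (forall t, x <= t <= x + d -> f t = g t) -> cderiv f x = cderiv g x.
Proof.
move=> d0 [fRe fIm] [gRe gIm] efg; rewrite /cderiv.
by rewrite (derive1_eq_right d0 fRe gRe) ?(derive1_eq_right d0 fIm gIm) // => t /efg ->.
Qed.

Lemma cderiv_eq_left (f g : R -> R[i]) x d : 0 < d ->
  cderivable f x -> cderivable g x ->
  (forall t, x - d <= t <= x -> f t = g t) -> cderiv f x = cderiv g x.
Proof.
move=> d0 [fRe fIm] [gRe gIm] efg; rewrite /cderiv.
by rewrite (derive1_eq_left d0 fRe gRe) ?(derive1_eq_left d0 fIm gIm) // => t /efg ->.
Qed.

End OneSidedDerivative.

Section Waves.
Variable R : realType.
Local Notation C := R[i].
Local Notation i := (iC R).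

Definition wave (A B : C) (k t : R) : C := A * rC (cos (k * t)) + B * rC (sin (k * t)).

Lemma is_derive_cos_sin (a b k t : R) :
  is_derive t 1 (fun s => a * cos (k * s) + b * sin (k * s))
    (k * (b * cos (k * t) - a * sin (k * t))).
Proof.
have dlin (s : R) : is_derive s (1 : R) ( *%R k) k.
  have := is_deriveZ k (is_derive_id s (1 : R)).
  by rewrite /GRing.scale /= mulr1.
have dcos := is_derive1_comp (is_derive_cos (k * t)) (dlin t).
have dsin := is_derive1_comp (is_derive_sin (k * t)) (dlin t).
apply: (is_derive_eq (is_deriveD (is_deriveZ a dcos) (is_deriveZ b dsin))).
by rewrite /GRing.scale /=; ring.
Qed.

Lemma Re_wave A B k : (fun t => complex.Re (wave A B k t)) =
  (fun t => complex.Re A * cos (k * t) + complex.Re B * sin (k * t)).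
Proof. by apply: funext => t; case: A => ? ?; case: B => ? ?; rewrite /wave /rC /=; ring. Qed.

Lemma Im_wave A B k : (fun t => complex.Im (wave A B k t)) =
  (fun t => complex.Im A * cos (k * t) + complex.Im B * sin (k * t)).
Proof. by apply: funext => t; case: A => ? ?; case: B => ? ?; rewrite /wave /rC /=; ring. Qed.

Lemma cderivable_wave A B k t : cderivable (wave A B k) t.
Proof.
rewrite /cderivable Re_wave Im_wave; split.
  by have [] := is_derive_cos_sin (complex.Re A) (complex.Re B) k t.
by have [] := is_derive_cos_sin (complex.Im A) (complex.Im B) k t.
Qed.

Lemma cderiv_wave A B k : cderiv (wave A B k) = wave (rC k * B) (- (rC k * A)) k.
Proof.
apply: funext => t; rewrite /cderiv Re_wave Im_wave !derive1E.
rewrite !(@derive_val _ _ _ _ _ _ _ (is_derive_cos_sin _ _ _ _)).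
rewrite [in RHS](complexE A) [in RHS](complexE B) /wave /rC /iC !(rmorphM, rmorphB) /=; ring.
Qed.

Lemma wave0 A B k : wave A B k 0 = A.
Proof. by rewrite /wave mulr0 cos0 sin0 mulr1 mulr0 addr0. Qed.

Lemma wave_eq0 k t : wave 0 0 k t = 0.
Proof. by rewrite /wave !mul0r addr0. Qed.

Lemma cderiv_wave0 A B k : cderiv (wave A B k) 0 = rC k * B.
Proof. by rewrite cderiv_wave wave0. Qed.

Lemma wave_eigen A B k t :
  cderivable (cderiv (wave A B k)) t /\
  - cderiv (cderiv (wave A B k)) t = rC (k ^+ 2) * wave A B k t.
Proof.
rewrite !cderiv_wave; split; first exact: cderivable_wave.
by rewrite /wave /rC !rmorphM /=; ring.
Qed.

Lemma wave_reflect Cc D k l t : wave Cc D k (l - t) =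
  wave (Cc * rC (cos (k * l)) + D * rC (sin (k * l)))
       (Cc * rC (sin (k * l)) - D * rC (cos (k * l))) k t.
Proof. by rewrite /wave mulrBr cosB sinB /rC !(rmorphD, rmorphB, rmorphM) /=; ring. Qed.

Lemma exists_sin_neq0 (k l : R) : 0 < k -> 0 < l ->
  exists2 t, 0 <= t <= l & sin (k * t) != 0.
Proof.
move=> k0 l0; have pi0 := pi_gt0 R.
pose t := Num.min l (pi / (4%:R * k)).
have t0 : 0 < t by rewrite lt_min l0 divr_gt0 // mulr_gt0.
have kt : k * t <= pi / 4%:R.
  have -> : pi / 4%:R = k * (pi / (4%:R * k)) by field; rewrite gt_eqF.
  by rewrite ler_pM2l // ge_min lexx orbT.
exists t; first by rewrite ltW // ge_min lexx.
by rewrite gt_eqF // sin_gt0_pihalf // mulr_gt0 //=; lra.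
Qed.

Lemma wave_inj A B A' B' k l : 0 < k -> 0 < l ->
  (forall t, 0 <= t <= l -> wave A B k t = wave A' B' k t) -> A = A' /\ B = B'.
Proof.
move=> k0 l0 e.
have eA : A = A' by rewrite -(wave0 A B k) -(wave0 A' B' k) e // lexx ltW.
split => //; have [t tl st] := exists_sin_neq0 k0 l0.
have := e t tl; rewrite /wave eA => /addrI /mulIf; apply.
by apply: contra st => /eqP [] ->.
Qed.

(* Matching the coefficients of e^{ikt} and e^{-ikt} in
   A cos(kt) + B sin(kt) = Cc cos(k(l - t)) + D sin(k(l - t)), where z = e^{ikl}. *)
Definition transfer (z A B Cc D : C) : Prop :=
  z * (A - i * B) = Cc + i * D /\ z * (Cc - i * D) = A + i * B.

Lemma iC_neq0 : i != 0.
Proof. by apply/eqP => -[] /eqP; rewrite oner_eq0. Qed.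

Lemma iC_mul_iC (u : C) : i * (i * u) = - u.
Proof. by rewrite mulrA -expr2 sqr_i mulN1r. Qed.

Lemma expi_neq0 (x : R) : expi x != 0.
Proof.
apply/eqP => -[]; rewrite /= !(mul0r, mul1r, subr0, add0r) => c0 s0.
by have := cos2Dsin2 x; rewrite c0 s0 expr0n addr0 => /eqP; rewrite eq_sym oner_eq0.
Qed.

Lemma i_combination_inj (A B A' B' : C) :
  A + i * B = A' + i * B' -> A - i * B = A' - i * B' -> A = A' /\ B = B'.
Proof.
have two0 : 2%:R != 0 :> C by rewrite pnatr_eq0.
have recover (X Y : C) :
  (X, Y) = ((X + i * Y + (X - i * Y)) / 2%:R, (X + i * Y - (X - i * Y)) / (2%:R * i)).
  by congr pair; field; rewrite ?mulf_neq0 ?two0 ?iC_neq0.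
by move=> hp hm; have := recover A B; rewrite hp hm -(recover A' B') => -[-> ->].
Qed.

Lemma transfer_rotate (x : R) Cc D : transfer (expi x)
  (Cc * rC (cos x) + D * rC (sin x)) (Cc * rC (sin x) - D * rC (cos x)) Cc D.
Proof.
have cs1 : rC (cos x ^+ 2 + sin x ^+ 2) = 1 by rewrite cos2Dsin2.
case: Cc => c1 c2; case: D => d1 d2; split; first rewrite -[RHS]mulr1 -cs1.
all: rewrite /rC /iC /expi; apply/eqP; rewrite eq_complex /=; apply/andP; split; apply/eqP; ring.
Qed.

Lemma transfer_rotateP (x : R) A B Cc D : transfer (expi x) A B Cc D <->
  A = Cc * rC (cos x) + D * rC (sin x) /\ B = Cc * rC (sin x) - D * rC (cos x).
Proof.
split=> [[hm hp] | [-> ->]]; last exact: transfer_rotate.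
have [hm' hp'] := transfer_rotate x Cc D.
apply: i_combination_inj; first by rewrite -hp hp'.
by apply: (mulfI (expi_neq0 x)); rewrite hm hm'.
Qed.

Lemma wave_transferP k l A B Cc D : 0 < k -> 0 < l ->
  transfer (expi (k * l)) A B Cc D <->
  (forall t, 0 <= t <= l -> wave A B k t = wave Cc D k (l - t)).
Proof.
move=> k0 l0; rewrite transfer_rotateP.
split=> [[-> ->] t _ | e]; first by rewrite wave_reflect.
by apply: (wave_inj k0 l0) => t /e ->; rewrite wave_reflect.
Qed.

Lemma cderiv_wave_end k l A B Cc D : transfer (expi (k * l)) A B Cc D ->
  cderiv (wave A B k) l = - (rC k * D).
Proof.
have cs1 : rC (cos (k * l) ^+ 2 + sin (k * l) ^+ 2) = 1 by rewrite cos2Dsin2.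
move/transfer_rotateP => [-> ->]; rewrite cderiv_wave /wave -[D in RHS]mulr1 -cs1.
by rewrite /rC !(rmorphD, rmorphXn, rmorphM, rmorphB) /=; ring.
Qed.

Lemma wave_end k l A B Cc D : transfer (expi (k * l)) A B Cc D -> wave A B k l = Cc.
Proof. by move/transfer_rotateP => [-> ->]; rewrite -wave_reflect subrr wave0. Qed.

Lemma transfer_eq0 (x : R) Cc D : transfer (expi x) 0 0 Cc D -> Cc = 0 /\ D = 0.
Proof.
rewrite /transfer !(mulr0, subr0, addr0) => -[/esym hp /eqP].
rewrite mulf_eq0 (negbTE (expi_neq0 x)) => /eqP hm.
by apply: i_combination_inj; rewrite mulr0 ?addr0 ?subr0.
Qed.

End Waves.

Lemma colv_split_eq (T : Type) m n (u v : 'cV[T]_(m + n)) :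
  (forall j, u (lshift n j) 0 = v (lshift n j) 0) ->
  (forall j, u (rshift m j) 0 = v (rshift m j) 0) -> u = v.
Proof.
move=> eql eqr; apply/matrixP => p q; rewrite (ord1 q) -(splitK p).
by case: (fintype.split p) => j /=.
Qed.

Section Scattering.
Variables (R : realType) (N : nat) (V : finType) (o tau : 'I_N -> V).
Local Notation C := R[i].
Local Notation i := (iC R).
Local Notation S := (Smx R o tau).
Local Notation deg := (deg o tau).
Local Notation usub a j := (a (lshift N j) 0).
Local Notation dsub a j := (a (rshift N j) 0).

(* [Sapp] with its argument given by its two halves, so that linearity can be
   checked on functions rather than under the binders of the sums. *)
Definition scatter (x y : 'I_N -> C) (p : 'I_(N + N)) : C :=
  match fintype.split p with
  | inl j => 2%:R / (deg (o j))%:R *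
               (\sum_(e | o e == o j) y e + \sum_(e | tau e == o j) x e) - y j
  | inr j => 2%:R / (deg (tau j))%:R *
               (\sum_(e | o e == tau j) y e + \sum_(e | tau e == tau j) x e) - x j
  end.

Lemma SappE (a : 'cV[C]_(N + N)) p :
  Sapp o tau a p 0 = scatter (fun j => usub a j) (fun j => dsub a j) p.
Proof. by rewrite mxE. Qed.

Lemma Sapp_linear (c : C) u v : Sapp o tau (c *: u + v) = c *: Sapp o tau u + Sapp o tau v.
Proof.
have E (sub : 'I_N -> 'I_(N + N)) :
    (fun j => (c *: u + v) (sub j) 0) = (fun j => c * u (sub j) 0 + v (sub j) 0).
  by apply: funext => j; rewrite !mxE.
apply/matrixP => p q; rewrite (ord1 q) [RHS]mxE [in RHS]mxE !SappE !E /scatter.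
by case: fintype.split => j; rewrite !big_split /= -!mulr_sumr; ring.
Qed.

Lemma SmxE (a : 'cV[C]_(N + N)) : S *m a = Sapp o tau a.
Proof.
have Sadd (u v : 'cV[C]_(N + N)) : Sapp o tau (u + v) = Sapp o tau u + Sapp o tau v.
  by have := Sapp_linear 1 u v; rewrite !scale1r.
have S0 : Sapp o tau (0 : 'cV[C]_(N + N)) = 0.
  by have := Sapp_linear (-1) 0 0; rewrite scaler0 addr0 scaleN1r addNr.
rewrite {1}[a]matrix_sum_delta mulmx_sumr [in RHS](matrix_sum_delta a).
rewrite (big_morph (Sapp o tau) Sadd S0).
apply: eq_bigr => q _; rewrite !big_ord1 -(scalemxAr (a q 0) S) -colE.
have := Sapp_linear (a q 0) (delta_mx q 0) 0; rewrite !addr0 S0 addr0 => ->.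
by congr (_ *: _); apply/matrixP => p r; rewrite (ord1 r) !mxE.
Qed.

(* Of the amplitudes a = (a_j; b_j), b_j arrives at the origin and a_j at the
   terminus of e_j. *)
Definition incoming (a : 'cV[C]_(N + N)) (v : V) : C :=
  \sum_(j | o j == v) dsub a j + \sum_(j | tau j == v) usub a j.

Lemma Smx_mul_usub (a : 'cV[C]_(N + N)) j :
  usub (S *m a) j = 2%:R / (deg (o j))%:R * incoming a (o j) - dsub a j.
Proof. by rewrite SmxE SappE /scatter (unsplitK (inl _ j)). Qed.

Lemma Smx_mul_dsub (a : 'cV[C]_(N + N)) j :
  dsub (S *m a) j = 2%:R / (deg (tau j))%:R * incoming a (tau j) - usub a j.
Proof. by rewrite SmxE SappE /scatter (unsplitK (inr _ j)). Qed.

Lemma Umx_mul_usub z (a : 'cV[C]_(N + N)) j : usub (Umx o tau z *m a) j = z j * usub (S *m a) j.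
Proof. by rewrite /Umx -mulmxA mul_diag_mx !mxE (unsplitK (inl _ j)). Qed.

Lemma Umx_mul_dsub z (a : 'cV[C]_(N + N)) j : dsub (Umx o tau z *m a) j = z j * dsub (S *m a) j.
Proof. by rewrite /Umx -mulmxA mul_diag_mx !mxE (unsplitK (inr _ j)). Qed.

Lemma Jmx_mul (a : 'cV[C]_(N + N)) : Jmx R N *m a = col_mx (dsubmx a) (usubmx a).
Proof. by rewrite /Jmx -{1}[a]vsubmxK mul_block_col !mul0mx !mul1mx add0r addr0. Qed.

Lemma Mmx_mul (a : 'cV[C]_(N + N)) : Mmx R o tau *m a = trace_vec
  (fun j => usub (S *m a) j + dsub a j) (fun j => dsub (S *m a) j + usub a j)
  (fun j => i * (usub (S *m a) j - dsub a j)) (fun j => i * (dsub (S *m a) j - usub a j)).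
Proof.
rewrite /Mmx mul_col_mx -scalemxAl mulmxDl mulmxBl Jmx_mul /trace_vec.
by congr col_mx; apply: colv_split_eq => j; rewrite !(col_mxEu, col_mxEd, mxE).
Qed.

Lemma incident_sum_const v (c : C) :
  \sum_(j | o j == v) c + \sum_(j | tau j == v) c = (deg v)%:R * c.
Proof. by rewrite !sumr_const /deg natrD mulrDl !mulr_natl !cardsE. Qed.

Lemma incident_sum_deg0 v (F G : 'I_N -> C) : deg v = 0%N ->
  \sum_(j | o j == v) F j + \sum_(j | tau j == v) G j = 0.
Proof.
move/eqP; rewrite /deg addn_eq0 => /andP[/eqP/card0_eq no /eqP/card0_eq ntau].
by rewrite !big_pred0 ?addr0 // => j; [move: (ntau j) | move: (no j)]; rewrite !inE.
Qed.

Lemma deg_o_neq0 j : (deg (o j))%:R != 0 :> C.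
Proof.
rewrite pnatr_eq0 /deg addn_eq0 negb_and -!lt0n; apply/orP; left.
by apply/card_gt0P; exists j; rewrite inE.
Qed.

Lemma deg_tau_neq0 j : (deg (tau j))%:R != 0 :> C.
Proof.
rewrite pnatr_eq0 /deg addn_eq0 negb_and -!lt0n; apply/orP; right.
by apply/card_gt0P; exists j; rewrite inE.
Qed.

Definition standard_conditions (A Cc B D : 'I_N -> C) : Prop :=
  (exists g : V -> C, forall j, A j = g (o j) /\ Cc j = g (tau j)) /\
  (forall v, \sum_(j | o j == v) B j + \sum_(j | tau j == v) D j = 0).

Lemma kirchhoff_balance (a s : 'cV[C]_(N + N)) (g : V -> C) :
  (forall j, usub s j + dsub a j = g (o j) /\ dsub s j + usub a j = g (tau j)) ->
  forall v, \sum_(j | o j == v) (usub s j - dsub a j) +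
            \sum_(j | tau j == v) (dsub s j - usub a j) =
            (deg v)%:R * g v - 2%:R * incoming a v.
Proof.
move=> sg v; rewrite /incoming -incident_sum_const (mulrDr 2%:R) !mulr_sumr.
rewrite opprD addrACA -!sumrB; congr (_ + _); apply: eq_bigr => j /eqP <-.
  by have [<- _] := sg j; ring.
by have [_ <-] := sg j; ring.
Qed.

(* S is the scattering matrix of the standard conditions: the edge-end values
   s + Ja are continuous at the vertices and the fluxes s - Ja balance. *)
Lemma Smx_mulP (a s : 'cV[C]_(N + N)) : S *m a = s <->
  standard_conditions (fun j => usub s j + dsub a j) (fun j => dsub s j + usub a j)
    (fun j => i * (usub s j - dsub a j)) (fun j => i * (dsub s j - usub a j)).
Proof.
have balance g v :
    (forall j, usub s j + dsub a j = g (o j) /\ dsub s j + usub a j = g (tau j)) ->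
    \sum_(j | o j == v) (i * (usub s j - dsub a j)) +
    \sum_(j | tau j == v) (i * (dsub s j - usub a j)) =
    i * ((deg v)%:R * g v - 2%:R * incoming a v).
  by move=> sg; rewrite -!mulr_sumr -(mulrDr i) (kirchhoff_balance sg).
split=> [Sa | [[g sg] kir]].
  pose g v := 2%:R / (deg v)%:R * incoming a v.
  have sg j : usub s j + dsub a j = g (o j) /\ dsub s j + usub a j = g (tau j).
    by rewrite -Sa Smx_mul_usub Smx_mul_dsub !subrK.
  split=> [|v]; first by exists g.
  rewrite (balance g) // /g; have [/incident_sum_deg0 in0|dv] := eqVneq (deg v) 0%N.
    by rewrite /incoming in0 !mulr0 subr0 mulr0.
  by rewrite mulrA [_ * (_ / _)]mulrC divfK ?subrr ?mulr0 // pnatr_eq0.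
have gE v : (deg v)%:R != 0 :> C -> g v = 2%:R / (deg v)%:R * incoming a v.
  move=> dv; have := kir v; rewrite (balance g) // => /eqP.
  rewrite mulf_eq0 (negbTE (iC_neq0 R)) subr_eq0 => /eqP e.
  by apply: (mulfI dv); rewrite e; field.
apply: colv_split_eq => j.
  by rewrite Smx_mul_usub -gE ?deg_o_neq0 //; have [<- _] := sg j; rewrite addrK.
by rewrite Smx_mul_dsub -gE ?deg_tau_neq0 //; have [_ <-] := sg j; rewrite addrK.
Qed.

Definition admissible_trace (z : 'I_N -> C) (w : 'cV[C]_((N + N) + (N + N))) : Prop :=
  exists A Cc B D, w = trace_vec A Cc B D /\ standard_conditions A Cc B D /\
    forall j, transfer (z j) (A j) (B j) (Cc j) (D j).

Lemma fixed_vector_admissibleP z w :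
  (exists a, Umx o tau z *m a = a /\ w = Mmx R o tau *m a) <-> admissible_trace z w.
Proof.
split=> [[a [Ua ->]] | [A [Cc [B [D [-> [std tr]]]]]]].
  rewrite Mmx_mul; do 4 eexists; split; first reflexivity.
  split=> [|j]; first exact/Smx_mulP.
  rewrite -[in usub a j]Ua -[in dsub a j]Ua Umx_mul_usub Umx_mul_dsub /transfer !iC_mul_iC.
  by split; ring.
have two0 : 2%:R != 0 :> C by rewrite pnatr_eq0.
pose a : 'cV[C]_(N + N) :=
  col_mx (\col_j ((Cc j + i * D j) / 2%:R)) (\col_j ((A j + i * B j) / 2%:R)).
pose s : 'cV[C]_(N + N) :=
  col_mx (\col_j ((A j - i * B j) / 2%:R)) (\col_j ((Cc j - i * D j) / 2%:R)).
have aU j : usub a j = (Cc j + i * D j) / 2%:R by rewrite col_mxEu mxE.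
have aD j : dsub a j = (A j + i * B j) / 2%:R by rewrite col_mxEd mxE.
have sU j : usub s j = (A j - i * B j) / 2%:R by rewrite col_mxEu mxE.
have sD j : dsub s j = (Cc j - i * D j) / 2%:R by rewrite col_mxEd mxE.
have half_add X Y : (X - i * Y) / 2%:R + (X + i * Y) / 2%:R = X by field.
have half_sub X Y : i * ((X - i * Y) / 2%:R - (X + i * Y) / 2%:R) = Y.
  have -> : (X - i * Y) / 2%:R - (X + i * Y) / 2%:R = i * - Y by field.
  by rewrite iC_mul_iC opprK.
have fA : (fun j => usub s j + dsub a j) = A by apply: funext => j; rewrite sU aD half_add.
have fC : (fun j => dsub s j + usub a j) = Cc by apply: funext => j; rewrite sD aU half_add.
have fB : (fun j => i * (usub s j - dsub a j)) = B.
  by apply: funext => j; rewrite sU aD half_sub.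
have fD : (fun j => i * (dsub s j - usub a j)) = D.
  by apply: funext => j; rewrite sD aU half_sub.
have Sa : S *m a = s by apply/Smx_mulP; rewrite fA fC fB fD.
exists a; split; last by rewrite Mmx_mul Sa fA fC fB fD.
apply: colv_split_eq => j; rewrite ?Umx_mul_usub ?Umx_mul_dsub Sa ?sU ?sD ?aU ?aD mulrA.
  by case: (tr j) => ->.
by case: (tr j) => _ ->.
Qed.

End Scattering.

Section Eigenfunctions.
Variables (R : realType) (N : nat) (V : finType) (o tau : 'I_N -> V).
Local Notation C := R[i].

Lemma trace_vec0 : trace_vec (fun _ : 'I_N => 0 : C) (fun=> 0) (fun=> 0) (fun=> 0) = 0.
Proof.
have col0 : \col_(j < N) (0 : C) = 0 by apply/matrixP => p q; rewrite !mxE.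
by rewrite /trace_vec col0 !col_mx0.
Qed.

Lemma kirchhoff_sum (c : C) (B D : 'I_N -> C) v :
  \sum_(j | o j == v) c * B j - \sum_(j | tau j == v) - (c * D j) =
  c * (\sum_(j | o j == v) B j + \sum_(j | tau j == v) D j).
Proof. by rewrite sumrN opprK -!mulr_sumr mulrDr. Qed.

Lemma wave_in_eigenspace l k (A Cc B D : 'I_N -> C) :
  standard_conditions o tau A Cc B D ->
  (forall j, transfer (expi (k * l j)) (A j) (B j) (Cc j) (D j)) ->
  in_eigenspace o tau l (k ^+ 2) (fun j => wave (A j) (B j) k).
Proof.
move=> [[g gE] kir] tr; split=> [j t | j t _ | | v].
- exact: cderivable_wave.
- exact: wave_eigen.
- by exists g => j; rewrite wave0 (wave_end (tr j)).
rewrite (eq_bigr _ (fun j _ => cderiv_wave0 _ _ _)).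
by rewrite (eq_bigr _ (fun j _ => cderiv_wave_end (tr j))) kirchhoff_sum kir mulr0.
Qed.

Lemma inSigma_inT0 (z : 'I_N -> C) : inSigma o tau z -> inT o tau z 0.
Proof.
case=> _ [l [lpos [k [k0 [eig [zE _]]]]]].
exists l; split=> //; exists k; do 3!split=> //.
exists (fun _ => wave 0 0 k); split.
  apply: (wave_in_eigenspace (Cc := fun=> 0) (D := fun=> 0)) => [|j].
    by split=> [|v]; [exists (fun _ => 0) | rewrite !big1_eq addr0].
  by split; ring.
exists (fun=> 0), (fun=> 0), (fun=> 0), (fun=> 0); rewrite trace_vec0; split=> //.
case: ifP => _ j; last by move=> t _; rewrite wave_eq0 !mul0r addr0.
by do 3!split=> //; move=> t _; rewrite wave_eq0.
Qed.

(* For k = 0 the point z = 1 is also reached with k = 1 and all lengths 2 pi; a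
   positive k is needed to read the coefficients of a wave off its values. *)
Lemma expi_pos_freq (l0 : 'I_N -> R) k0 : (forall j, 0 < l0 j) -> 0 <= k0 ->
  exists k (l : 'I_N -> R), [/\ 0 < k, forall j, 0 < l j &
    (fun j => expi (k0 * l0 j)) = (fun j => expi (k * l j))].
Proof.
move=> l0pos; rewrite le_eqVlt => /orP[/eqP <- | k0pos]; last by exists k0, l0.
exists 1, (fun _ => pi *+ 2); split=> // [j|]; first by rewrite mulrn_wgt0 // pi_gt0.
by apply: funext => j; rewrite mul0r mul1r /expi cos0 sin0 cos2pi sin2pi.
Qed.

Lemma inT_admissible (z : 'I_N -> C) w : inT o tau z w -> admissible_trace o tau z w.
Proof.
case=> l [lpos [k [k0 [_ [-> [f [[fder _ [g gE] kir] [A [Cc [B [D [-> htr]]]]]]]]]]]].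
exists A, Cc, B, D; split=> //.
have edge0 j : onEdge l j 0 by rewrite /onEdge lexx ltW.
have edgel j : onEdge l j (l j) by rewrite /onEdge lexx ltW.
case: eqP htr => [-> | /eqP kn0] htr.
  split=> [|j]; last first.
    by have [-> [-> [-> _]]] := htr j; rewrite mul0r /expi cos0 sin0; split; ring.
  split=> [|v]; last by rewrite !big1 ?addr0 // => j _; have [_ [B0 [D0 _]]] := htr j.
  exists g => j; have [-> [_ [_ fA]]] := htr j.
  by split; [rewrite -(fA _ (edge0 j)) (gE j).1 | rewrite -(fA _ (edgel j)) (gE j).2].
have kpos : 0 < k by rewrite lt_def kn0.
have fw j t : onEdge l j t -> f j t = wave (A j) (B j) k t by move/(htr j t) => [].
have tr j : transfer (expi (k * l j)) (A j) (B j) (Cc j) (D j).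
  apply: (iffRL (wave_transferP _ _ _ _ kpos (lpos j))) => t /(htr j t) [e1 e2].
  by rewrite /wave -e1 -e2.
split=> //; split=> [|v].
  exists g => j; rewrite -(wave0 (A j) (B j) k) -(wave_end (tr j)) -!fw //; exact: gE.
have d0 j : cderiv (f j) 0 = rC k * B j.
  rewrite -(cderiv_wave0 (A j)); apply: (cderiv_eq_right (lpos j) (fder j 0)) => [|t].
    exact: cderivable_wave.
  by rewrite add0r => /fw.
have dl j : cderiv (f j) (l j) = - (rC k * D j).
  rewrite -(cderiv_wave_end (tr j)); apply: (cderiv_eq_left (lpos j) (fder j (l j))) => [|t].
    exact: cderivable_wave.
  by rewrite subrr => /fw.
move: (kir v); rewrite (eq_bigr _ (fun j _ => d0 j)) (eq_bigr _ (fun j _ => dl j)).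
by rewrite kirchhoff_sum => /eqP; rewrite mulf_eq0 /rC fmorph_eq0 (negbTE kn0) => /eqP.
Qed.

Lemma admissible_inT (z : 'I_N -> C) w :
  inSigma o tau z -> admissible_trace o tau z w -> inT o tau z w.
Proof.
move=> zS [A [Cc [B [D [wE [std tr]]]]]].
have [_ [l0 [l0pos [k0 [k00 [_ [z0E _]]]]]]] := zS.
have [k [l [kpos lpos zE]]] := expi_pos_freq l0pos k00.
have {z0E zE} zkl : z = (fun j => expi (k * l j)) by rewrite z0E zE.
rewrite zkl in tr.
pose f j := wave (A j) (B j) k.
(* A trace whose waves all vanish is zero, and is realised by the eigenvalue that
   witnesses z \in Sigma. *)
have [nz | zero] := pselect (exists j t, onEdge l j t /\ f j t != 0); last first.
  suff -> : w = 0 by apply: inSigma_inT0.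
  have AB0 j : A j = 0 /\ B j = 0.
    apply: (wave_inj kpos (lpos j)) => t tl; rewrite wave_eq0; apply/eqP.
    by apply: contraT => ft; case: zero; exists j, t.
  have CD0 j : Cc j = 0 /\ D j = 0.
    by have := tr j; have [-> ->] := AB0 j; apply: transfer_eq0.
  rewrite wE -trace_vec0; congr trace_vec; apply: funext => j.
  - exact: (AB0 j).1.
  - exact: (CD0 j).1.
  - exact: (AB0 j).2.
  - exact: (CD0 j).2.
have eigf : in_eigenspace o tau l (k ^+ 2) f := wave_in_eigenspace std tr.
exists l; split=> //; exists k; split; first exact: ltW.
split; first by exists f.
split=> //; exists f; split=> //; exists A, Cc, B, D; split=> //.
rewrite gt_eqF // => j t tl; split=> //.
exact: (iffLR (wave_transferP _ _ _ _ kpos (lpos j)) (tr j)).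
Qed.

End Eigenfunctions.

Theorem mainTheorem7 (R : realType) (N : nat) (V : finType) (o tau : 'I_N -> V)
    (z : 'I_N -> R[i]) (w : 'cV[R[i]]_((N + N) + (N + N))) :
  inT o tau z w <->
  (inSigma o tau z /\
   exists a : 'cV[R[i]]_(N + N),
     Umx o tau z *m a = a /\ w = Mmx R o tau *m a).
Proof.
rewrite fixed_vector_admissibleP; split=> [zw | [zS zw]]; last exact: admissible_inT.
by split; [exists w | apply: inT_admissible].
Qed.
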